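(* Let $f:\mathbb{R}^n\to\mathbb{R}_{>0}$ be a twice continuously differentiable convex function that is $\gamma$-second order robust and $\mu$-multiplicatively smooth with respect to the $\ell_2$ norm, for some $\gamma,\mu>0$. Let $\mathbf{x}^0\in\mathbb{R}^n$, let $\mathbf{x}^*\in\mathbb{R}^n$ be arbitrary, and $R:=\|\mathbf{x}^0-\mathbf{x}^*\|_2$. Consider gradient descent $\mathbf{x}^{t+1}=\mathbf{x}^t-\eta_t\nabla f(\mathbf{x}^t)$ with $\eta_t=\min\bigl\{\frac{1}{2\mu f(\mathbf{x}^t)},\frac{1}{\gamma\|\nabla f(\mathbf{x}^t)\|_2}\bigr\}$. Let $\delta\in(0,1)$, $\varepsilon>0$. Then there is an absolute constant $c>0$ such that $f(\mathbf{x}^T)\le(1+\delta)f(\mathbf{x}^* )+\varepsilon$ whenever $$T\ge c\Bigl(\mu R^2\Bigl(\frac1\delta+\log\frac{f(\mathbf{x}^0)-f(\mathbf{x}^* )}{\varepsilon}\Bigr)+\gamma R\log\frac{f(\mathbf{x}^0)-f(\mathbf{x}^* )}{\varepsilon}\Bigr).$$ In particular, if $\gamma\le2\sqrt\beta$ and $\mu\le\beta/m$ for some $\beta>0$ and positive integer $m$, this holds whenever $$T\ge c'\Bigl(\frac{\beta R^2}{m}\Bigl(\frac1\delta+\log\frac{f(\mathbf{x}^0)-f(\mathbf{x}^* )}{\varepsilon}\Bigr)+\sqrt\beta R\log\frac{f(\mathbf{x}^0)-f(\mathbf{x}^* )}{\varepsilon}\Bigr)$$ for an absolute constant $c'>0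$.
   Context: A twice differentiable $f:\mathbb{R}^n\to\mathbb{R}$ is $q$-second order robust with respect to a norm $\|\cdot\|$ if for all $\mathbf{x},\mathbf{x}'$ with $\|\mathbf{x}'-\mathbf{x}\|\le1/q$, $\tfrac12\nabla^2f(\mathbf{x})\preceq\nabla^2f(\mathbf{x}')\preceq2\nabla^2f(\mathbf{x})$. A twice differentiable $f:\mathbb{R}^n\to\mathbb{R}_{>0}$ is $\mu$-multiplicatively smooth with respect to $\|\cdot\|$ if for all $\mathbf{x},\tilde{\mathbf{x}}$, $\tilde{\mathbf{x}}^\top\nabla^2f(\mathbf{x})\tilde{\mathbf{x}}\le\mu f(\mathbf{x})\|\tilde{\mathbf{x}}\|^2$. When $\nabla f(\mathbf{x}^t)=\mathbf{0}$ the second term in the step size is read as $+\infty$. *)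

From HB Require Import structures.
From mathcomp Require Import all_boot all_order all_algebra.
From mathcomp Require Import all_classical all_reals all_analysis.
Set Implicit Arguments. Unset Strict Implicit. Unset Printing Implicit Defensive.
Import Order.TTheory GRing.Theory Num.Theory.
Import numFieldNormedType.Exports.
Local Open Scope ring_scope.

Section Defs.
Variables (R : realType) (n : nat).
Implicit Types (f : 'rV[R]_n -> R) (x y v : 'rV[R]_n).

Definition ebasis (i : 'I_n) : 'rV[R]_n := \row_(j < n) ((j == i)%:R).

Definition partial f (i : 'I_n) : 'rV[R]_n -> R := fun x => 'D_(ebasis i) f x.

Definition twice_cont_diff f : Prop :=
  continuous f /\
  (forall i x, derivable f x (ebasis i)) /\
  (forall i, continuous (partial f i)) /\
  (forall i j x, derivable (partial f i) x (ebasis j)) /\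
  (forall i j, continuous (partial (partial f i) j)).

Definition grad f x : 'rV[R]_n := \row_(i < n) partial f i x.
Definition hessian f x : 'M[R]_n := \matrix_(i < n, j < n) partial (partial f i) j x.

Definition l2norm x : R := Num.sqrt (\sum_(i < n) x ord0 i ^+ 2).

Definition qform (A : 'M[R]_n) v : R := \sum_(i < n) \sum_(j < n) v ord0 i * A i j * v ord0 j.

Definition loewner_le (A B : 'M[R]_n) : Prop := forall v, qform A v <= qform B v.

Definition convex_fun f : Prop :=
  forall x y (t : R), 0 <= t <= 1 ->
    f ((1 - t) *: x + t *: y) <= (1 - t) * f x + t * f y.

Definition second_order_robust (q : R) f : Prop :=
  forall x x', l2norm (x' - x) <= q^-1 ->
    loewner_le ((1/2 : R) *: hessian f x) (hessian f x') /\
    loewner_le (hessian f x') (2 *: hessian f x).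

Definition mult_smooth (mu : R) f : Prop :=
  (forall x, 0 < f x) /\
  forall x v, qform (hessian f x) v <= mu * f x * l2norm v ^+ 2.

(* step size; when grad f x = 0 the second term is +oo *)
Definition step_size (gamma mu : R) f x : R :=
  if grad f x == 0 then (2 * mu * f x)^-1
  else Order.min (2 * mu * f x)^-1 (gamma * l2norm (grad f x))^-1.

Fixpoint gd (gamma mu : R) f (x0 : 'rV[R]_n) (t : nat) : 'rV[R]_n :=
  match t with
  | 0 => x0
  | t'.+1 => let x := gd gamma mu f x0 t' in x - step_size gamma mu f x *: grad f x
  end.

End Defs.

From HB Require Import structures.
From mathcomp Require Import all_boot all_order all_algebra.
From mathcomp Require Import all_classical all_reals all_analysis.
From mathcomp Require Import ring lra.
Import Order.TTheory GRing.Theory Num.Theory.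
Import numFieldNormedType.Exports.
Local Open Scope ring_scope.
Local Open Scope classical_set_scope.
Set Implicit Arguments. Unset Strict Implicit.

(* Along gradient descent the gap D_t = f x_t - f x* drops by at least
   eta_t |grad f x_t|^2 / 2: second-order robustness keeps the Hessian within
   twice its value at x_t over the whole step, and multiplicative smoothness
   bounds that value by mu f x_t.  The distance to x* does not increase, so
   convexity gives D_t <= |grad f x_t| R.  In both step-size regimes this makes
   the potential A f x* / D - (A + B) ln D, with A = 8 mu R^2 and B = 2 gamma R,
   grow by at least 1 per step while D_t > delta f x* + eps, whereas it can
   grow by less than A / delta + (A + B) ln (D_0 / eps) in total.  This gives
   c = 8, and c' = 16 follows from gamma <= 2 sqrt beta and mu <= beta / m. *)

Section Euclidean.
Variables (R : realType) (n : nat).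
Implicit Types (u v : 'rV[R]_n) (a : R).

Definition dot u v : R := \sum_(i < n) u ord0 i * v ord0 i.

Lemma dotC u v : dot u v = dot v u.
Proof. by apply: eq_bigr => i _; rewrite mulrC. Qed.

Lemma dotZl a u v : dot (a *: u) v = a * dot u v.
Proof. by rewrite /dot mulr_sumr; apply: eq_bigr => i _; rewrite mxE mulrA. Qed.

Lemma dotZr a u v : dot u (a *: v) = a * dot u v.
Proof. by rewrite dotC dotZl dotC. Qed.

Lemma dotrN u v : dot u (- v) = - dot u v.
Proof. by rewrite -scaleN1r dotZr mulN1r. Qed.

Lemma sqr_l2norm v : l2norm v ^+ 2 = \sum_(i < n) v ord0 i ^+ 2.
Proof. by rewrite sqr_sqrtr // sumr_ge0 // => i _; apply: sqr_ge0. Qed.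

Lemma dotvv v : dot v v = l2norm v ^+ 2.
Proof. by rewrite sqr_l2norm; apply: eq_bigr => i _; rewrite expr2. Qed.

Lemma l2norm_ge0 v : 0 <= l2norm v.
Proof. exact: sqrtr_ge0. Qed.

Lemma l2normZ a v : l2norm (a *: v) = `|a| * l2norm v.
Proof.
rewrite /l2norm -sqrtr_sqr -sqrtrM ?sqr_ge0 // mulr_sumr.
by congr Num.sqrt; apply: eq_bigr => i _; rewrite mxE exprMn.
Qed.

Lemma l2normN v : l2norm (- v) = l2norm v.
Proof. by rewrite -scaleN1r l2normZ normrN normr1 mul1r. Qed.

Lemma l2norm_eq0 v : (l2norm v == 0) = (v == 0).
Proof.
rewrite -sqrf_eq0 sqr_l2norm psumr_eq0 => [|i _]; last exact: sqr_ge0.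
apply/allP/eqP => [v0|-> i _]; last by rewrite /= mxE expr0n.
apply/rowP => j; rewrite mxE; apply/eqP.
by rewrite -sqrf_eq0; apply: (implyP (v0 j _)); rewrite ?mem_index_enum.
Qed.

Lemma l2norm_gt0 v : v != 0 -> 0 < l2norm v.
Proof. by rewrite lt0r l2norm_eq0 l2norm_ge0 andbT. Qed.

Lemma sqr_l2normB u v :
  l2norm (u - v) ^+ 2 = l2norm u ^+ 2 - 2 * dot u v + l2norm v ^+ 2.
Proof.
rewrite !sqr_l2norm /dot mulr_sumr -sumrB -big_split /=.
by apply: eq_bigr => i _; rewrite !mxE; ring.
Qed.

Lemma dot_le_l2norm u v : dot u v <= l2norm u * l2norm v.
Proof.
set a := l2norm u; set b := l2norm v.
have [ab0|ab_gt0] := eqVneq (a * b) 0.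
  rewrite ab0; move/eqP: ab0; rewrite mulf_eq0 !l2norm_eq0 => /orP[]/eqP->;
  by rewrite /dot big1 // => i _; rewrite mxE ?mul0r ?mulr0.
have ab0 : 0 < a * b by rewrite lt0r ab_gt0; apply: mulr_ge0; apply: l2norm_ge0.
have := sqr_ge0 (l2norm (b *: u - a *: v)).
rewrite sqr_l2normB !l2normZ dotZl dotZr !ger0_norm ?l2norm_ge0 //.
have -> : (b * a) ^+ 2 - 2 * (b * (a * dot u v)) + (a * b) ^+ 2 =
          2 * (a * b) * (a * b - dot u v) by ring.
by rewrite pmulr_rge0 ?subr_ge0 // mulr_gt0.
Qed.

Lemma qformZ a (M : 'M[R]_n) v : qform (a *: M) v = a * qform M v.
Proof.
rewrite /qform mulr_sumr; apply: eq_bigr => i _; rewrite mulr_sumr.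
by apply: eq_bigr => j _; rewrite mxE; ring.
Qed.

End Euclidean.

Section RealFunctions.
Variable R : realType.
Implicit Types (f g dg : R -> R).

Lemma nbhs0'P (P : R -> Prop) : (\forall t \near 0^', P t) <->
  exists2 d : R, 0 < d & forall t, `|t| < d -> t != 0 -> P t.
Proof.
split=> [/nbhs_ballP[d d0 dP]|[d d0 dP]].
  by exists d => // t td; apply: dP; rewrite /ball /= sub0r normrN.
by apply/nbhs_ballP; exists d => // t; rewrite /ball /= sub0r normrN; apply: dP.
Qed.

Lemma is_derive1P f (a l : R) :
  is_derive a 1 f l <-> (fun t => t^-1 * (f (t + a) - f a)) @ 0^' --> l.
Proof.
have E : (fun h : R => h^-1 *: ((f \o shift a) (h *: 1) - f a)) =
          (fun t => t^-1 * (f (t + a) - f a)).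
  by apply/funext => t /=; rewrite [_%:A]mulr1.
split=> [[]|fl]; first by rewrite /derivable /derive E => fl <-; exact: fl.
by apply: DeriveDef; rewrite /derivable /derive E; [apply/cvg_ex; exists l | apply: cvg_lim].
Qed.

Lemma MVT0_segment g dg (b : R) :
  (forall u, is_derive u (1 : R) g (dg u)) -> 0 <= b ->
  exists2 th, 0 <= th <= b & g b - g 0 = dg th * b.
Proof.
move=> D b0; have [|th] := @MVT_segment R g dg 0 b b0 (fun x _ => D x).
  by apply: derivable_within_continuous => x _; case: (D x).
by rewrite subr0 in_itv /=; exists th.
Qed.

Lemma MVT0_norm g dg (b : R) :
  (forall u, is_derive u (1 : R) g (dg u)) ->
  exists2 th, `|th| <= `|b| & g b - g 0 = dg th * b.
Proof.
move=> D; have [b0|b0] := leP 0 b.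
  have [th /andP[th0 thb] E] := MVT0_segment D b0.
  by exists th => //; rewrite !ger0_norm // (le_trans th0 thb).
have [|th] := @MVT_segment R g dg b 0 (ltW b0) (fun x _ => D x).
  by apply: derivable_within_continuous => x _; case: (D x).
rewrite in_itv /= => /andP[bth th0] E; exists th.
  by rewrite !ler0_norm ?lerN2 // ltW.
by apply/eqP; rewrite -opprB E sub0r mulrN opprK.
Qed.

(* phi minus the parabola with the same value and slope at 0 and curvature M
   is nonincreasing on [0, b]. *)
Lemma taylor2_le (phi dphi d2phi : R -> R) (M b : R) :
  (forall s, is_derive s (1 : R) phi (dphi s)) ->
  (forall s, is_derive s (1 : R) dphi (d2phi s)) ->
  0 <= b -> (forall s, 0 <= s <= b -> d2phi s <= M) ->
  phi b <= phi 0 + b * dphi 0 + b ^+ 2 * (M / 2).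
Proof.
move=> D1 D2 b0 M_ge.
set q := fun s => s * dphi 0 + s ^+ 2 * (M / 2).
have Dq s : is_derive s (1 : R) q (dphi 0 + s *+ 2 * (M / 2)).
  by apply: is_derive_eq; rewrite !scaler0 !add0r /GRing.scale /=; ring.
have Dchi s : is_derive s (1 : R) (phi - q) (dphi s - (dphi 0 + s *+ 2 * (M / 2))).
  exact: is_deriveB.
have [th /andP[th0 thb] Echi] := MVT0_segment Dchi b0.
have [ze /andP[ze0 zeth] Ed] := MVT0_segment D2 th0.
have slope_le : dphi th - dphi 0 <= th * M.
  by rewrite Ed mulrC ler_wpM2l // M_ge // ze0 (le_trans zeth thb).
suff : (phi - q) b - (phi - q) 0 <= 0.
  by rewrite subr_le0 !fctE /q expr0n /= !mul0r addr0 subr0; lra.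
rewrite Echi mulr_le0_ge0 //.
have -> : th *+ 2 * (M / 2) = th * M by rewrite mulr2n; field.
by rewrite subr_le0 -lerBlDl.
Qed.

Lemma is_derive0_le_chord (phi : R -> R) (a K : R) :
  is_derive 0 (1 : R) phi a -> (forall t, 0 < t <= 1 -> phi t - phi 0 <= t * K) ->
  a <= K.
Proof.
move=> /is_derive1P /cvg_dnbhs_at_right Da chord.
apply: (ler_cvg_to Da (cvg_cst K)); near=> t.
have t0 : 0 < t by near: t; exact: nbhs_right_gt.
have t1 : t <= 1 by near: t; exact: nbhs_right_le ltr01.
by rewrite addr0 ler_pdivrMl // chord // t0.
Unshelve. all: by end_near.
Qed.

End RealFunctions.

Section LineRestriction.
Variables (R : realType) (n : nat).
Implicit Types (h : 'rV[R]_n -> R) (p v w x y : 'rV[R]_n).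

Lemma is_derive_along h y w u0 : derivable h (y + u0 *: w) w ->
  is_derive u0 (1 : R) (fun u => h (y + u *: w)) ('D_w h (y + u0 *: w)).
Proof.
move=> D; apply/is_derive1P.
have -> : (fun t => t^-1 * (h (y + (t + u0) *: w) - h (y + u0 *: w))) =
  (fun t => t^-1 *: ((h \o shift (y + u0 *: w)) (t *: w) - h (y + u0 *: w))).
  by apply/funext => t /=; rewrite scalerDl addrCA.
exact: D.
Qed.

(* The mean value theorem along e_k, plus continuity of the k-th partial
   derivative at p. *)
Lemma partial_increment_cvg h (k : 'I_n) p w (c : R) :
  (forall y, derivable h y (ebasis R k)) -> {for p, continuous (partial h k)} ->
  (fun t => t^-1 * (h (p + t *: w + (t * c) *: ebasis R k) - h (p + t *: w)))
     @ 0^' --> c * partial h k p.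
Proof.
move=> Dh Ch; apply/cvgrPdist_lt => e e0.
have c1 : 0 < `|c| + 1 by rewrite ltr_pwDr.
have /nbhs_normP[d d0 near_p] :
    \forall y \near p, `|partial h k p - partial h k y| < e / (`|c| + 1).
  by move/cvgrPdist_lt: Ch; apply; rewrite divr_gt0.
set W := `|w| + `|c| * `|ebasis R k|.
have W1 : 0 < W + 1 by rewrite ltr_pwDr // addr_ge0 // mulr_ge0.
apply/nbhs0'P; exists (d / (W + 1)) => [|t td t0]; first by rewrite divr_gt0.
set g := fun u => h (p + t *: w + u *: ebasis R k).
have Dg u : is_derive u (1 : R) g (partial h k (p + t *: w + u *: ebasis R k)).
  exact: is_derive_along.
have [th thb E] := MVT0_norm (t * c) Dg.
have -> : h (p + t *: w) = g 0 by rewrite /g scale0r addr0.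
rewrite -/(g (t * c)) E.
set q := partial h k (p + _ + _).
have -> : t^-1 * (q * (t * c)) = c * q by field.
rewrite -mulrBr normrM.
have near_pq : `|p - (p + t *: w + th *: ebasis R k)| < d.
  rewrite -addrA opprD addrA subrr add0r normrN.
  apply: le_lt_trans (ler_normD _ _) _; rewrite !normrZ.
  apply: (@le_lt_trans _ _ (`|t| * W)).
    rewrite /W mulrDr lerD2l mulrA ler_wpM2r //.
    by apply: le_trans thb _; rewrite normrM.
  move: td; rewrite ltr_pdivlMr // => /(le_lt_trans _); apply.
  by rewrite ler_wpM2l // lerDl.
apply: (@le_lt_trans _ _ (`|c| * (e / (`|c| + 1)))).
  by rewrite ler_wpM2l // ltW // near_p.
by rewrite mulrA ltr_pdivrMr // mulrC ltr_pM2l // ltrDl.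
Qed.

Definition rtrunc (k : nat) v : 'rV[R]_n :=
  \row_(j < n) (if (j < k)%N then v ord0 j else 0).

Lemma rtruncS (k : nat) (kn : (k < n)%N) v :
  rtrunc k.+1 v = rtrunc k v + v ord0 (Ordinal kn) *: ebasis R (Ordinal kn).
Proof.
apply/rowP => j; rewrite !mxE -val_eqE /= ltnS leq_eqVlt.
case: ltngtP => [//|//|jk]; rewrite ?mulr0 ?addr0 // add0r mulr1.
by congr (v _ _); apply/val_inj.
Qed.

(* Moving along the first k coordinates one at a time is a telescoping sum
   of increments along single basis vectors. *)
Lemma rtrunc_increment_cvg h p v :
  (forall i y, derivable h y (ebasis R i)) -> (forall i, continuous (partial h i)) ->
  forall k, (k <= n)%N ->
  (fun t => t^-1 * (h (p + t *: rtrunc k v) - h p)) @ 0^' -->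
    \sum_(i < n | (i < k)%N) v ord0 i * partial h i p.
Proof.
move=> Dh Ch; elim=> [_|k IH kn].
  rewrite big_pred0 // (_ : rtrunc 0 v = 0); last by apply/rowP => j; rewrite !mxE.
  by under eq_fun do rewrite scaler0 addr0 subrr mulr0; exact: cvg_cst.
rewrite (bigD1 (Ordinal kn)) //=.
rewrite (eq_bigl (fun i : 'I_n => (i < k)%N)); last first.
  by move=> i; rewrite ltnS leq_eqVlt -val_eqE /=; case: ltngtP.
have -> : (fun t => t^-1 * (h (p + t *: rtrunc k.+1 v) - h p)) =
  (fun t => t^-1 * (h (p + t *: rtrunc k v + (t * v ord0 (Ordinal kn)) *: ebasis R (Ordinal kn))
                    - h (p + t *: rtrunc k v)))
  + (fun t => t^-1 * (h (p + t *: rtrunc k v) - h p)).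
  apply/funext => t /=; rewrite rtruncS scalerDr scalerA addrA -mulrDr.
  by rewrite addrA subrK.
apply: cvgD; first exact: partial_increment_cvg (Dh _) (Ch _ _).
exact: IH (ltnW kn).
Qed.

(* Chain rule along a line from continuous partial derivatives alone: f is
   never assumed to be Frechet differentiable. *)
Lemma is_derive_line h x v (s : R) :
  (forall i y, derivable h y (ebasis R i)) -> (forall i, continuous (partial h i)) ->
  is_derive s (1 : R) (fun s => h (x + s *: v)) (dot v (grad h (x + s *: v))).
Proof.
move=> Dh Ch; apply/is_derive1P.
have := rtrunc_increment_cvg (p := x + s *: v) (v := v) Dh Ch (leqnn n).
rewrite (_ : rtrunc n v = v); last by apply/rowP => j; rewrite !mxE ltn_ord.
rewrite (eq_bigl xpredT) => [|i]; last exact: ltn_ord.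
have -> : dot v (grad h (x + s *: v)) = \sum_(i < n) v ord0 i * partial h i (x + s *: v).
  by apply: eq_bigr => i _; rewrite mxE.
suff -> : (fun t => t^-1 * (h (x + (t + s) *: v) - h (x + s *: v))) =
          (fun t => t^-1 * (h (x + s *: v + t *: v) - h (x + s *: v))) by [].
by apply/funext => t; rewrite scalerDl addrA [x + _ + _]addrAC.
Qed.

Lemma is_derive_line_C2 f x v (s : R) : twice_cont_diff f ->
  is_derive s (1 : R) (fun s => f (x + s *: v)) (dot v (grad f (x + s *: v))).
Proof. by move=> [_ [Df [Cf _]]]; apply: is_derive_line. Qed.

Lemma is_derive_line_grad f x v (s : R) : twice_cont_diff f ->
  is_derive s (1 : R) (fun s => dot v (grad f (x + s *: v)))
                      (qform (hessian f (x + s *: v)) v).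
Proof.
move=> [_ [_ [_ [D2f C2f]]]].
have -> : (fun s => dot v (grad f (x + s *: v))) =
          \sum_(i < n) (fun s => v ord0 i * partial f i (x + s *: v)).
  by apply/funext => t; rewrite fct_sumE; apply: eq_bigr => i _; rewrite mxE.
apply: is_derive_eq; first by apply: is_derive_sum => i; apply/is_deriveZ/is_derive_line.
apply: eq_bigr => i _; rewrite /dot [_ *: _]mulr_sumr; apply: eq_bigr => j _.
by rewrite !mxE; ring.
Qed.

End LineRestriction.

Section Potential.
Variable R : realType.
Implicit Types (A B fs D c : R).

Lemma ler_lnB D (D' : R) c : 0 < D' -> 0 < D -> D' <= D * (1 - c) -> c <= ln D - ln D'.
Proof.
move=> D'0 D0 D'le.
have ratio0 : 0 < D' / D by rewrite divr_gt0.
have -> : ln D' = ln D + ln (D' / D) by rewrite -lnM ?posrE // mulrC divfK ?gt_eqF.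
have : ln (D' / D) <= D' / D - 1.
  by have := @le_ln1Dx R (D' / D - 1); rewrite addrCA subrr addr0; apply; lra.
have : D' / D <= 1 - c by rewrite ler_pdivrMr // mulrC.
lra.
Qed.

Definition potential A B fs D : R := A * fs / D - (A + B) * ln D.

Lemma potential_incr_ratio A B fs D (D' K : R) :
  0 <= A -> 0 <= B -> 0 <= fs -> 0 < D' -> 0 < D -> 0 < K <= A + B ->
  D' <= D - D / K -> 1 + potential A B fs D <= potential A B fs D'.
Proof.
move=> A0 B0 fs0 D'0 D0 /andP[K0 KAB] D'le.
have D'D : D' <= D by apply: le_trans D'le _; rewrite gerBl divr_ge0 // ltW.
have lnD : K^-1 <= ln D - ln D'.
  by apply: ler_lnB => //; rewrite mulrBr mulr1.
have inv_le : A * fs / D <= A * fs / D'.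
  by rewrite ler_wpM2l ?mulr_ge0 // lef_pV2 ?posrE.
have : 1 <= (A + B) * (ln D - ln D').
  apply: le_trans (ler_wpM2l (addr_ge0 A0 B0) lnD).
  by rewrite ler_pdivlMr // mul1r.
rewrite /potential; lra.
Qed.

Lemma potential_incr_quadratic A B fs D (D' : R) :
  0 < A -> 0 <= B -> 0 < fs -> 0 < D' ->
  D' <= D - D ^+ 2 / (A * fs) -> 1 + potential A B fs D <= potential A B fs D'.
Proof.
move=> A0 B0 fs0 D'0 D'le.
have Afs0 : 0 < A * fs by rewrite mulr_gt0.
have D'D : D' <= D by apply: le_trans D'le _; rewrite gerBl divr_ge0 ?sqr_ge0 ?ltW.
have D0 : 0 < D by apply: lt_le_trans D'D.
have lnD : 0 <= ln D - ln D' by rewrite subr_ge0 ler_ln ?posrE.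
have gapD : D ^+ 2 <= A * fs * (D - D').
  by rewrite mulrC -ler_pdivrMr //; lra.
have : 1 <= A * fs / D' - A * fs / D.
  have -> : A * fs / D' - A * fs / D = A * fs * (D - D') / (D * D').
    by field; rewrite !gt_eqF.
  rewrite ler_pdivlMr ?mulr_gt0 // mul1r.
  by apply: le_trans gapD; rewrite expr2 ler_pM2l.
have : 0 <= (A + B) * (ln D - ln D') by rewrite mulr_ge0 // addr_ge0 // ltW.
rewrite /potential; lra.
Qed.

Lemma potential_gain_lt A B fs Dinit D delta eps :
  0 < A -> 0 <= B -> 0 < fs -> 0 < delta -> 0 < eps ->
  delta * fs + eps < D -> D <= Dinit ->
  potential A B fs D - potential A B fs Dinit < A / delta + (A + B) * ln (Dinit / eps).
Proof.
move=> A0 B0 fs0 delta0 eps0 Dgt DDinit.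
have dfs0 : 0 < delta * fs by rewrite mulr_gt0.
have D0 : 0 < D by lra.
have Dinit0 : 0 < Dinit by apply: lt_le_trans DDinit.
have inv_lt : A * fs / D - A * fs / Dinit < A / delta.
  have : 0 <= A * fs / Dinit by rewrite divr_ge0 ?mulr_ge0 ?ltW.
  suff : A * fs / D < A / delta by lra.
  by rewrite -mulrA ltr_pM2l // ltr_pdivrMr // ltr_pdivlMl //; lra.
have ln_le : ln Dinit - ln D <= ln (Dinit / eps).
  by rewrite ln_div ?posrE // lerD2l lerN2 ler_ln ?posrE //; lra.
have : (A + B) * (ln Dinit - ln D) <= (A + B) * ln (Dinit / eps).
  by apply: ler_wpM2l => //; rewrite addr_ge0 // ltW.
rewrite /potential; lra.
Qed.

End Potential.

Section GradientDescent.
Variables (R : realType) (n : nat) (f : 'rV[R]_n -> R) (gamma mu : R).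
Hypotheses (f_C2 : twice_cont_diff f) (f_gt0 : forall x, 0 < f x).
Hypotheses (gamma_gt0 : 0 < gamma) (mu_gt0 : 0 < mu).
Hypotheses (f_robust : second_order_robust gamma f) (f_smooth : mult_smooth mu f).
Implicit Types (x xs : 'rV[R]_n).

Local Notation eta x := (step_size gamma mu f x).
Local Notation step x := (x - step_size gamma mu f x *: grad f x).

Lemma step_size_gt0 x : 0 < eta x.
Proof.
have fx0 := f_gt0 x; rewrite /step_size; case: eqP => [_|/eqP g0].
  by rewrite invr_gt0 !mulr_gt0.
by rewrite lt_min !invr_gt0 !mulr_gt0 // l2norm_gt0.
Qed.

Lemma step_size_le x : eta x <= (2 * mu * f x)^-1.
Proof. by rewrite /step_size; case: eqP => _; rewrite ?ge_min lexx. Qed.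

Lemma step_size_grad_le x : eta x * l2norm (grad f x) <= gamma^-1.
Proof.
rewrite /step_size; case: eqP => [->|/eqP /l2norm_gt0 g0].
  have /eqP-> : l2norm (0 : 'rV[R]_n) == 0 by rewrite l2norm_eq0.
  by rewrite mulr0 invr_ge0 ltW.
apply: le_trans (ler_wpM2r (ltW g0) (_ : _ <= (gamma * l2norm (grad f x))^-1)) _.
  by rewrite ge_min lexx orbT.
by rewrite invfM mulfVK ?gt_eqF.
Qed.

Lemma step_size_cases x :
  eta x = (2 * mu * f x)^-1 \/ eta x * (gamma * l2norm (grad f x)) = 1.
Proof.
rewrite /step_size; case: eqP => [_|/eqP /l2norm_gt0 g0]; first by left.
rewrite minEle; case: ifP => _; [by left | right].
by rewrite mulVf // gt_eqF // mulr_gt0.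
Qed.

Lemma hessian_step_le x (s : R) : 0 <= s <= eta x ->
  qform (hessian f (x + s *: - grad f x)) (- grad f x) <=
    2 * mu * f x * l2norm (grad f x) ^+ 2.
Proof.
move=> /andP[s0 s_le]; have [_ smooth_x] := f_smooth.
have near_x : l2norm (x + s *: - grad f x - x) <= gamma^-1.
  rewrite addrAC subrr add0r l2normZ l2normN ger0_norm //.
  by apply: le_trans (step_size_grad_le x); rewrite ler_wpM2r // l2norm_ge0.
have [_ /(_ (- grad f x)) hess_le] := f_robust near_x.
apply: le_trans hess_le _; rewrite qformZ -!mulrA ler_pM2l // mulrA -l2normN.
exact: smooth_x.
Qed.

Lemma f_step_descent x : f (step x) <= f x - eta x * l2norm (grad f x) ^+ 2 / 2.
Proof.
have := taylor2_le (fun s => is_derive_line_C2 x (- grad f x) s f_C2)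
  (fun s => is_derive_line_grad x (- grad f x) s f_C2)
  (ltW (step_size_gt0 x)) (fun s => @hessian_step_le x s).
rewrite scale0r addr0 scalerN dotC dotrN dotvv.
have eta_le : eta x * (2 * mu * f x) <= 1.
  by rewrite -ler_pdivlMr ?mul1r ?step_size_le // !mulr_gt0.
have : 0 <= (1 - eta x * (2 * mu * f x)) * (eta x * l2norm (grad f x) ^+ 2).
  by rewrite mulr_ge0 ?subr_ge0 // mulr_ge0 ?sqr_ge0 ?(ltW (step_size_gt0 x)).
nra.
Qed.

Lemma f_step_le x : f (step x) <= f x.
Proof.
apply: le_trans (f_step_descent x) _; rewrite gerBl.
have e0 := step_size_gt0 x.
by rewrite divr_ge0 // mulr_ge0 ?sqr_ge0 // ltW.
Qed.

Lemma f_gd_le x0 t : f (gd gamma mu f x0 t) <= f x0.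
Proof. by elim: t => [//|t]; apply: le_trans (f_step_le _). Qed.

Hypothesis f_convex : convex_fun f.

Lemma convex_first_order x y : f x + dot (grad f x) (y - x) <= f y.
Proof.
have chord t : 0 < t <= 1 ->
    f (x + t *: (y - x)) - f (x + 0 *: (y - x)) <= t * (f y - f x).
  move=> /andP[t0 t1]; rewrite scale0r addr0.
  have -> : x + t *: (y - x) = (1 - t) *: x + t *: y.
    by apply/rowP => i; rewrite !mxE; ring.
  by have := f_convex x y (t := t); rewrite ltW // t1 => /(_ isT); lra.
have := is_derive0_le_chord (is_derive_line_C2 x (y - x) 0 f_C2) chord.
by rewrite scale0r addr0 dotC; lra.
Qed.

Lemma l2norm_step_le x xs : f xs <= f (step x) ->
  l2norm (step x - xs) <= l2norm (x - xs).
Proof.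
move=> fxs_le; rewrite -ler_sqr ?nnegrE ?l2norm_ge0 //.
have := f_step_descent x; have := convex_first_order x xs.
set e := eta x; set g := grad f x.
have e0 : 0 < e := step_size_gt0 x.
have G0 := sqr_ge0 (l2norm g).
rewrite -opprB dotrN addrAC sqr_l2normB [dot (x - xs) _]dotC dotZl l2normZ exprMn.
rewrite real_normK ?num_real // => conv desc.
have : e * (e * l2norm g ^+ 2) <= e * (2 * dot g (x - xs)).
  by apply: ler_wpM2l; lra.
nra.
Qed.

(* The two step-size regimes, and for the first one whether the gap D is
   above or below f xs, give the three ways the gap shrinks. *)
Lemma gap_step_le x xs (Rr : R) : l2norm (x - xs) <= Rr -> f xs < f (step x) ->
  let D := f x - f xs in let D' := f (step x) - f xs in
  [\/ D' <= D - D / (8 * mu * Rr ^+ 2),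
      D' <= D - D ^+ 2 / (8 * mu * Rr ^+ 2 * f xs) |
      D' <= D - D / (2 * gamma * Rr)].
Proof.
move=> dist_le fxs_lt D D'.
have desc := f_step_descent x.
have conv := convex_first_order x xs.
have CS := dot_le_l2norm (grad f x) (x - xs).
have e0 := step_size_gt0 x; have fs0 := f_gt0 xs.
rewrite -opprB dotrN in conv.
set e := eta x in desc e0 *; set lg := l2norm (grad f x) in desc CS *.
set q := e * lg ^+ 2 / 2 in desc.
have lg0 : 0 <= lg := l2norm_ge0 _.
have q0 : 0 <= q by rewrite /q !mulr_ge0 ?sqr_ge0 ?invr_ge0 // ltW.
have D'0 : 0 < D' by rewrite subr_gt0.
have D'le : D' <= D - q by rewrite /D' /D; lra.
have gapD : D <= lg * Rr.
  by apply: le_trans (ler_wpM2l lg0 dist_le); rewrite /D; lra.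
have D0 : 0 < D by lra.
have lgRr0 : 0 < lg * Rr by apply: lt_le_trans gapD.
have lg_gt0 : 0 < lg.
  by rewrite lt0r lg0 andbT; apply: contraTneq lgRr0 => ->; rewrite mul0r ltxx.
have Rr0 : 0 < Rr by rewrite -(pmulr_rgt0 _ lg_gt0).
have gap2 : D ^+ 2 <= lg ^+ 2 * Rr ^+ 2.
  by rewrite -exprMn ler_sqr ?nnegrE // ltW.
have [eE|eE] := step_size_cases x; rewrite -/e -/lg in eE; last first.
  apply: Or33; apply: le_trans D'le _.
  rewrite lerD2l lerN2 ler_pdivrMr ?mulr_gt0 //.
  have -> : q * (2 * gamma * Rr) = e * (gamma * lg) * (lg * Rr) by rewrite /q; field.
  by rewrite eE mul1r.
have qA : q * (8 * mu * Rr ^+ 2) * (f xs + D) = 2 * (lg ^+ 2 * Rr ^+ 2).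
  rewrite /q eE /D [f xs + _]addrC subrK; field.
  by rewrite !gt_eqF // f_gt0.
have A0 : 0 < 8 * mu * Rr ^+ 2.
  by rewrite !mulr_gt0 // exprn_gt0.
have [fsD|Dfs] := leP (f xs) D.
  apply: Or31; apply: le_trans D'le _; rewrite lerD2l lerN2 ler_pdivrMr //.
  nra.
apply: Or32; apply: le_trans D'le _; rewrite lerD2l lerN2 ler_pdivrMr ?mulr_gt0 //.
nra.
Qed.

Lemma potential_step x xs (Rr : R) : l2norm (x - xs) <= Rr -> f xs < f (step x) ->
  1 + potential (8 * mu * Rr ^+ 2) (2 * gamma * Rr) (f xs) (f x - f xs) <=
      potential (8 * mu * Rr ^+ 2) (2 * gamma * Rr) (f xs) (f (step x) - f xs).
Proof.
move=> dist_le fxs_lt.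
have D'0 : 0 < f (step x) - f xs by rewrite subr_gt0.
have D0 : 0 < f x - f xs by apply: lt_le_trans D'0 _; rewrite lerD2r f_step_le.
have Rr0 : 0 < Rr.
  apply: lt_le_trans dist_le; rewrite l2norm_gt0 //.
  by apply: contraTneq D0 => /subr0_eq->; rewrite subrr ltxx.
have A0 : 0 < 8 * mu * Rr ^+ 2 by rewrite !mulr_gt0 // exprn_gt0.
have B0 : 0 < 2 * gamma * Rr by rewrite !mulr_gt0.
have fs0 := f_gt0 xs.
case: (gap_step_le dist_le fxs_lt) => D'le.
- apply: potential_incr_ratio D'le; rewrite ?(ltW A0) ?(ltW B0) ?(ltW fs0) //.
  by rewrite A0 lerDl ltW.
- by apply: potential_incr_quadratic D'le; rewrite ?(ltW B0).
- apply: potential_incr_ratio D'le; rewrite ?(ltW A0) ?(ltW B0) ?(ltW fs0) //.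
  by rewrite B0 lerDr ltW.
Qed.

Lemma gd_potential x0 xs t : f xs < f (gd gamma mu f x0 t) ->
  let pot := potential (8 * mu * l2norm (x0 - xs) ^+ 2) (2 * gamma * l2norm (x0 - xs)) (f xs) in
  l2norm (gd gamma mu f x0 t - xs) <= l2norm (x0 - xs) /\
  t%:R + pot (f x0 - f xs) <= pot (f (gd gamma mu f x0 t) - f xs).
Proof.
move=> + pot; elim: t => [_|t IH fxs_lt]; first by rewrite add0r.
have [dist_le pot_ge] := IH (lt_le_trans fxs_lt (f_step_le _)).
split; first exact: le_trans (l2norm_step_le (ltW fxs_lt)) dist_le.
by apply: le_trans (potential_step dist_le fxs_lt); rewrite -natr1 -addrA addrCA lerD2l.
Qed.

Lemma gd_converges x0 xs (delta eps : R) (T : nat) : 0 < delta -> 0 < eps ->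
  8 * (mu * l2norm (x0 - xs) ^+ 2 * (delta^-1 + ln ((f x0 - f xs) / eps)) +
       gamma * l2norm (x0 - xs) * ln ((f x0 - f xs) / eps)) <= T%:R ->
  f (gd gamma mu f x0 T) <= (1 + delta) * f xs + eps.
Proof.
move=> delta0 eps0 T_ge; rewrite leNgt; apply/negP => fT_gt.
set Rd := l2norm (x0 - xs) in T_ge; set L := ln _ in T_ge.
set xT := gd gamma mu f x0 T in fT_gt *.
have fs0 := f_gt0 xs; have dfs0 := mulr_gt0 delta0 fs0.
have gapT : delta * f xs + eps < f xT - f xs by lra.
have fxs_lt : f xs < f xT by lra.
have gapT_le : f xT - f xs <= f x0 - f xs by rewrite lerD2r f_gd_le.
have Rd0 : 0 < Rd.
  rewrite l2norm_gt0 //; apply: contraTneq fxs_lt => /subr0_eq x0E.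
  by rewrite -leNgt (le_trans (f_gd_le _ _)) // x0E.
have L0 : 0 < L by rewrite ln_gt0 // ltr_pdivlMr // mul1r; lra.
have [_ pot_ge] := gd_potential fxs_lt.
have A0 : 0 < 8 * mu * Rd ^+ 2 by rewrite !mulr_gt0 // exprn_gt0.
have B0 : 0 <= 2 * gamma * Rd by rewrite !mulr_ge0 // ltW.
have := potential_gain_lt A0 B0 fs0 delta0 eps0 gapT gapT_le.
have : 0 <= gamma * Rd * L by rewrite !mulr_ge0 // ltW.
rewrite -/L; move: pot_ge T_ge; rewrite -/Rd; nra.
Qed.

End GradientDescent.

Lemma iteration_bound_le (R : realType) (gamma mu beta m Rd delta L : R) :
  0 < mu -> mu <= beta / m -> gamma <= 2 * Num.sqrt beta ->
  0 <= Rd -> 0 < delta -> 0 < L ->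
  8 * (mu * Rd ^+ 2 * (delta^-1 + L) + gamma * Rd * L) <=
  16 * (beta * Rd ^+ 2 / m * (delta^-1 + L) + Num.sqrt beta * Rd * L).
Proof.
move=> mu0 mu_le gamma_le Rd0 delta0 L0.
have K0 : 0 < delta^-1 + L by rewrite addr_gt0 // invr_gt0.
have mu_term : mu * Rd ^+ 2 * (delta^-1 + L) <= beta * Rd ^+ 2 / m * (delta^-1 + L).
  apply: ler_wpM2r; first exact: ltW.
  by rewrite mulrAC; apply: ler_wpM2r => //; apply: sqr_ge0.
have gamma_term : gamma * Rd * L <= 2 * (Num.sqrt beta * Rd * L).
  by rewrite !mulrA; apply: ler_wpM2r; [exact: ltW | exact: ler_wpM2r].
have : 0 <= beta * Rd ^+ 2 / m * (delta^-1 + L).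
  apply: mulr_ge0 (ltW K0); rewrite mulrAC mulr_ge0 ?sqr_ge0 //.
  exact: ltW (lt_le_trans mu0 mu_le).
lra.
Qed.

Theorem theorem3 (R : realType) :
  exists c c' : R, 0 < c /\ 0 < c' /\
  (forall (n : nat) (f : 'rV[R]_n -> R) (gamma mu : R) (x0 xs : 'rV[R]_n)
          (delta eps : R) (T : nat),
     twice_cont_diff f -> convex_fun f -> (forall x, 0 < f x) ->
     0 < gamma -> 0 < mu ->
     second_order_robust gamma f -> mult_smooth mu f ->
     0 < delta < 1 -> 0 < eps ->
     let Rd := l2norm (x0 - xs) in
     let L := ln ((f x0 - f xs) / eps) in
     c * (mu * Rd ^+ 2 * (delta^-1 + L) + gamma * Rd * L) <= T%:R ->
     f (gd gamma mu f x0 T) <= (1 + delta) * f xs + eps) /\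
  (forall (n : nat) (f : 'rV[R]_n -> R) (gamma mu beta : R) (m : nat)
          (x0 xs : 'rV[R]_n) (delta eps : R) (T : nat),
     twice_cont_diff f -> convex_fun f -> (forall x, 0 < f x) ->
     0 < gamma -> 0 < mu ->
     second_order_robust gamma f -> mult_smooth mu f ->
     0 < beta -> (0 < m)%N ->
     gamma <= 2 * Num.sqrt beta -> mu <= beta / m%:R ->
     0 < delta < 1 -> 0 < eps ->
     let Rd := l2norm (x0 - xs) in
     let L := ln ((f x0 - f xs) / eps) in
     c' * (beta * Rd ^+ 2 / m%:R * (delta^-1 + L) + Num.sqrt beta * Rd * L) <= T%:R ->
     f (gd gamma mu f x0 T) <= (1 + delta) * f xs + eps).
Proof.
exists 8, 16; do 2 split => //; split.
  move=> n f gamma mu x0 xs delta eps T f_C2 f_convex f_gt0 gamma_gt0 mu_gt0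
    f_robust f_smooth /andP[delta0 _] eps0 Rd L.
  exact: gd_converges.
move=> n f gamma mu beta m x0 xs delta eps T f_C2 f_convex f_gt0 gamma_gt0 mu_gt0
  f_robust f_smooth beta0 m0 gamma_le mu_le /andP[delta0 _] eps0 Rd L T_ge.
have [gap_le|gap_gt] := leP (f x0 - f xs) eps.
  have := f_gd_le f_C2 f_gt0 gamma_gt0 mu_gt0 f_robust f_smooth x0 T.
  by have := mulr_gt0 delta0 (f_gt0 xs); lra.
apply: gd_converges => //; apply: le_trans T_ge.
apply: iteration_bound_le => //; first exact: l2norm_ge0.
by rewrite ln_gt0 // ltr_pdivlMr // mul1r.
Qed.
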